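(* Let $A\in\mathbb{R}^{m\times n}$ with $m>n$ and $\mathrm{rank}(A)=n$, $b\in\mathrm{range}(A)$, $c\in\mathbb{R}^n$, and consider the linear program $\min_{x\in\mathbb{R}^n}\{c^\top x: Ax=b\}$, whose unique feasible (hence optimal) point is $x^*=(A^\top A)^{-1}A^\top b$. Let $\eta>0$, $t_0=1$, $y_0=0$, $\lambda_0\in\mathbb{R}^m$ arbitrary, and for $k\ge0$: $$x_{k+1}=\arg\min_{x\in\mathbb{R}^n}\{c^\top x+y_k^\top(Ax-b)+\tfrac\eta2\|Ax-b\|_2^2\}=(A^\top A)^{-1}\big(A^\top b-\tfrac1\eta(A^\top y_k+c)\big),$$ $$\lambda_{k+1}=y_k+\eta(Ax_{k+1}-b),\quad t_{k+1}=\tfrac{1+\sqrt{1+4t_k^2}}{2},\quad y_{k+1}=\lambda_{k+1}+\tfrac{t_k-1}{t_{k+1}}(\lambda_{k+1}-\lambda_k)+\tfrac{t_k}{t_{k+1}}(\lambda_{k+1}-y_k).$$ Then for every $k\ge1$, $\lambda_k$ is an optimal solution of the dual problem $\max\{-b^\top\lambda: A^\top\lambda+c=0\}$, and for every $T\ge1$, $$x_T=x^*-\frac{(-1)^{T-1}}{\eta\,t_{T-1}}(A^\top A)^{-1}c,$$ so that $$|c^\top(x^*-x_T)|=\frac{c^\top(A^\top A)^{-1}c}{\eta\,t_{T-1}},\qquad\|Ax_T-b\|=\frac{\|A(A^\top A)^{-1}c\|}{\eta\,t_{T-1}},$$ for any norm $\|\cdot\|$, where $\frac{T}{2}\le t_{T-1}\le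 T$. In particular, when $c\neq0$ both the primal optimality gap and the feasibility violation are of exact order $1/T$. *)

From HB Require Import structures.
From mathcomp Require Import all_boot all_order all_algebra.
Set Implicit Arguments. Unset Strict Implicit. Unset Printing Implicit Defensive.
Import Order.TTheory GRing.Theory Num.Theory.
Local Open Scope ring_scope.

Definition dotv (R : rcfType) (k : nat) (u v : 'cV[R]_k) : R := (u^T *m v) 0 0.

Definition xstar (R : rcfType) (m n : nat) (A : 'M[R]_(m, n)) (b : 'cV[R]_m)
  : 'cV[R]_n := invmx (A^T *m A) *m (A^T *m b).

Definition alm_step (R : rcfType) (m n : nat) (A : 'M[R]_(m, n))
  (b : 'cV[R]_m) (c : 'cV[R]_n) (eta : R)
  (s : 'cV[R]_n * 'cV[R]_m * 'cV[R]_m * R) :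
  'cV[R]_n * 'cV[R]_m * 'cV[R]_m * R :=
  let: (x, lam, y, t) := s in
  let x' := invmx (A^T *m A) *m (A^T *m b - eta^-1 *: (A^T *m y + c)) in
  let lam' := y + eta *: (A *m x' - b) in
  let t' := (1 + Num.sqrt (1 + 4 * t ^+ 2)) / 2 in
  let y' := lam' + ((t - 1) / t') *: (lam' - lam) + (t / t') *: (lam' - y) in
  (x', lam', y', t').

(* Iterates, starting from x_0 = 0 (unused), lambda_0 = lam0, y_0 = 0, t_0 = 1. *)
Fixpoint alm_state (R : rcfType) (m n : nat) (A : 'M[R]_(m, n))
  (b : 'cV[R]_m) (c : 'cV[R]_n) (eta : R) (lam0 : 'cV[R]_m) (k : nat) :
  'cV[R]_n * 'cV[R]_m * 'cV[R]_m * R :=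
  match k with
  | 0 => (0, lam0, 0, 1)
  | k'.+1 => alm_step A b c eta (alm_state A b c eta lam0 k')
  end.

Definition alm_x R m n A b c eta lam0 k := (@alm_state R m n A b c eta lam0 k).1.1.1.
Definition alm_lam R m n A b c eta lam0 k := (@alm_state R m n A b c eta lam0 k).1.1.2.
Definition alm_y R m n A b c eta lam0 k := (@alm_state R m n A b c eta lam0 k).1.2.
Definition alm_t R m n A b c eta lam0 k := (@alm_state R m n A b c eta lam0 k).2.

Definition dual_optimal (R : rcfType) (m n : nat) (A : 'M[R]_(m, n))
  (b : 'cV[R]_m) (c : 'cV[R]_n) (lam : 'cV[R]_m) : Prop :=
  A^T *m lam + c = 0 /\
  forall mu : 'cV[R]_m, A^T *m mu + c = 0 -> - dotv b mu <= - dotv b lam.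

Definition is_norm (R : rcfType) (m : nat) (N : 'cV[R]_m -> R) : Prop :=
  (forall v, 0 <= N v) /\
  (forall v, N v = 0 -> v = 0) /\
  (forall (a : R) v, N (a *: v) = `|a| * N v) /\
  (forall u v, N (u + v) <= N u + N v).

From HB Require Import structures.
From mathcomp Require Import all_boot all_order all_algebra.
From mathcomp Require Import ring lra.
Import Order.TTheory GRing.Theory Num.Theory.
Local Open Scope ring_scope.
Set Implicit Arguments. Unset Strict Implicit.

(* The x-update is a stationary point of the augmented Lagrangian, so
   lambda_{k+1} = y_k + eta (A x_{k+1} - b) satisfies A^T lambda_{k+1} = -c
   exactly: every lambda_k with k >= 1 is dual feasible, and all dual feasible
   points have the same objective since the primal feasible set is {x*}.
   The dual residual of the extrapolated point then evolves as
   A^T y_{k+1} + c = -(t_k / t_{k+1}) (A^T y_k + c), hence equals (-1)^k c / t_k,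
   and substituting it into the x-update gives
   x_{k+1} = x* - (-1)^k / (eta t_k) (A^T A)^{-1} c.  Finally
   2 t_k <= sqrt(1 + 4 t_k^2) <= 2 t_k + 1 yields 1 + k/2 <= t_k <= 1 + k. *)

Section InnerProduct.
Variables (R : rcfType) (k : nat).
Implicit Types (u v w : 'cV[R]_k) (a : R).

Lemma dotvC u v : dotv u v = dotv v u.
Proof. by rewrite /dotv -[in LHS](trmxK (u^T *m v)) trmx_mul trmxK mxE. Qed.

Lemma dotvDr u v w : dotv u (v + w) = dotv u v + dotv u w.
Proof. by rewrite /dotv mulmxDr mxE. Qed.

Lemma dotvDl u v w : dotv (v + w) u = dotv v u + dotv w u.
Proof. by rewrite ![dotv _ u]dotvC dotvDr. Qed.

Lemma dotvZr a u v : dotv u (a *: v) = a * dotv u v.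
Proof. by rewrite /dotv -scalemxAr mxE. Qed.

Lemma dotvZl a u v : dotv (a *: u) v = a * dotv u v.
Proof. by rewrite dotvC dotvZr dotvC. Qed.

Lemma dotv0l v : dotv 0 v = 0.
Proof. by rewrite /dotv trmx0 mul0mx mxE. Qed.

Lemma dotvv_sum u : dotv u u = \sum_i u i 0 ^+ 2.
Proof. by rewrite /dotv mxE; apply: eq_bigr => i _; rewrite mxE expr2. Qed.

Lemma dotvv_ge0 u : 0 <= dotv u u.
Proof. by rewrite dotvv_sum; apply: sumr_ge0 => i _; exact: sqr_ge0. Qed.

Lemma dotvv_eq0 u : dotv u u = 0 -> u = 0.
Proof.
rewrite dotvv_sum => /(psumr_eq0P (fun i _ => sqr_ge0 (u i 0))) u2_eq0.
apply/matrixP => i j; rewrite ord1 mxE; apply/eqP.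
by rewrite -sqrf_eq0 u2_eq0.
Qed.

Lemma dotvvD u v : dotv (u + v) (u + v) = dotv u u + 2 * dotv u v + dotv v v.
Proof. by rewrite !dotvDr !dotvDl [dotv v u]dotvC; ring. Qed.

End InnerProduct.

Lemma dotv_mulmxr (R : rcfType) p q (A : 'M[R]_(p, q)) u v :
  dotv u (A *m v) = dotv (A^T *m u) v.
Proof. by rewrite /dotv trmx_mul trmxK mulmxA. Qed.

Section FullColumnRank.
Variables (R : rcfType) (m n : nat) (A : 'M[R]_(m, n)).
Hypothesis rankA : \rank A = n.

Lemma mulmx_full_col_eq0 (z : 'cV[R]_n) : A *m z = 0 -> z = 0.
Proof.
move=> Az0; have freeAt : row_free A^T by rewrite /row_free mxrank_tr rankA.
have : z^T *m A^T == 0 by rewrite -trmx_mul Az0 trmx0.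
by rewrite (mulmx_free_eq0 _ freeAt) => /eqP zt0; rewrite -[z]trmxK zt0 trmx0.
Qed.

Lemma gram_unitmx : A^T *m A \in unitmx.
Proof.
rewrite -row_free_unit; apply: inj_row_free => v vG0.
have : dotv (A *m v^T) (A *m v^T) = 0.
  by rewrite dotv_mulmxr mulmxA dotvC /dotv trmxK mulmxA vG0 mul0mx mxE.
by move/dotvv_eq0/mulmx_full_col_eq0 => vt0; rewrite -[v]trmxK vt0 trmx0.
Qed.

Lemma mul_gramVK (v : 'cV[R]_n) : A^T *m (A *m (invmx (A^T *m A) *m v)) = v.
Proof. by rewrite !mulmxA (mulmxV gram_unitmx) mul1mx. Qed.

Lemma xstar_eq {b : 'cV[R]_m} {x0} : A *m x0 = b -> xstar A b = x0.
Proof. by move=> <-; rewrite /xstar (mulmxA A^T) mulmxA (mulVmx gram_unitmx) mul1mx. Qed.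

Lemma dotv_gramV (v : 'cV[R]_n) :
  dotv v (invmx (A^T *m A) *m v)
  = dotv (A *m (invmx (A^T *m A) *m v)) (A *m (invmx (A^T *m A) *m v)).
Proof. by rewrite -{1}(mul_gramVK v) -dotv_mulmxr. Qed.

Lemma mul_gramV_neq0 (v : 'cV[R]_n) : v != 0 -> A *m (invmx (A^T *m A) *m v) != 0.
Proof. by apply: contraNneq => AMv0; rewrite -(mul_gramVK v) AMv0 mulmx0. Qed.

Lemma dotv_gramV_ge0 (v : 'cV[R]_n) : 0 <= dotv v (invmx (A^T *m A) *m v).
Proof. by rewrite dotv_gramV dotvv_ge0. Qed.

Lemma dotv_gramV_gt0 (v : 'cV[R]_n) : v != 0 -> 0 < dotv v (invmx (A^T *m A) *m v).
Proof.
move/mul_gramV_neq0 => AMv_neq0; rewrite lt_def dotv_gramV_ge0 andbT dotv_gramV.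
by apply: contra_neq AMv_neq0 => /dotvv_eq0.
Qed.

Lemma feasible_unique {b : 'cV[R]_m} {x0 z} : A *m x0 = b -> A *m z = b -> z = x0.
Proof.
move=> Ax0 Az; apply/eqP; rewrite -subr_eq0; apply/eqP.
by apply: mulmx_full_col_eq0; rewrite mulmxBr Az Ax0 subrr.
Qed.

End FullColumnRank.

Lemma aug_lagrangian_stationary_min (R : rcfType) m n (A : 'M[R]_(m, n)) b c
    (y : 'cV[R]_m) (eta : R) (x z : 'cV[R]_n) :
  0 <= eta -> c + A^T *m y + eta *: (A^T *m (A *m x - b)) = 0 ->
  dotv c x + dotv y (A *m x - b) + eta / 2 * dotv (A *m x - b) (A *m x - b)
  <= dotv c z + dotv y (A *m z - b) + eta / 2 * dotv (A *m z - b) (A *m z - b).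
Proof.
move=> eta_ge0 grad0; set r := A *m x - b; set d := z - x.
have -> : z = x + d by rewrite addrC subrK.
have -> : A *m (x + d) - b = r + A *m d by rewrite mulmxDr addrAC.
have first_order : dotv c d + dotv y (A *m d) + eta * dotv r (A *m d) = 0.
  by rewrite !dotv_mulmxr -dotvZl -!dotvDl grad0 dotv0l.
have curv : 0 <= eta / 2 * dotv (A *m d) (A *m d).
  by rewrite mulr_ge0 ?divr_ge0 ?dotvv_ge0.
rewrite dotvDr [dotv y (r + _)]dotvDr (dotvvD r (A *m d)).
move: first_order curv; set p := dotv r (A *m d); set q := dotv (A *m d) (A *m d).
by move=> first_order curv; lra.
Qed.

Lemma dual_feasible_objective (R : rcfType) m n (A : 'M[R]_(m, n)) b c {x0 mu} :
  A *m x0 = b -> A^T *m mu + c = 0 -> dotv b mu = - dotv c x0.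
Proof.
move=> Ax0 /eqP; rewrite addr_eq0 => /eqP Atmu.
by rewrite -Ax0 dotvC dotv_mulmxr Atmu -scaleN1r dotvZl mulN1r.
Qed.

Lemma is_norm_gt0 (R : rcfType) m (N : 'cV[R]_m -> R) v :
  is_norm N -> v != 0 -> 0 < N v.
Proof.
case=> [N_ge0 [N0 _]] v_neq0; rewrite lt_def N_ge0 andbT.
by apply: contraNneq v_neq0 => /N0 ->.
Qed.

Lemma ler_rate (R : rcfType) (q e T t : R) : 0 <= q -> 0 < e -> 0 < t ->
  T / 2 <= t <= T -> q / (e * T) <= q / (e * t) <= 2 * q / (e * T).
Proof.
move=> q_ge0 e_gt0 t_gt0 /andP[tT Tt]; have T_gt0 : 0 < T by lra.
have -> : 2 * q / (e * T) = q / (e * (T / 2)) by field; rewrite !gt_eqF.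
by apply/andP; split; rewrite ler_wpM2l // lef_pV2 ?posrE ?mulr_gt0 // ?ler_pM2l; lra.
Qed.

Section AcceleratedALM.
Variables (R : rcfType) (m n : nat) (A : 'M[R]_(m, n)).
Variables (b : 'cV[R]_m) (c : 'cV[R]_n) (eta : R) (lam0 : 'cV[R]_m).

Local Notation x := (alm_x A b c eta lam0).
Local Notation lam := (alm_lam A b c eta lam0).
Local Notation y := (alm_y A b c eta lam0).
Local Notation t := (alm_t A b c eta lam0).
Local Notation M := (invmx (A^T *m A)).

Lemma alm_xS k : x k.+1 = M *m (A^T *m b - eta^-1 *: (A^T *m y k + c)).
Proof. by rewrite /alm_x /alm_y /=; case: alm_state => [[[? ?] ?] ?]. Qed.

Lemma alm_lamS k : lam k.+1 = y k + eta *: (A *m x k.+1 - b).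
Proof. by rewrite /alm_x /alm_y /alm_lam /=; case: alm_state => [[[? ?] ?] ?]. Qed.

Lemma alm_yS k :
  y k.+1 = lam k.+1 + ((t k - 1) / t k.+1) *: (lam k.+1 - lam k)
                    + (t k / t k.+1) *: (lam k.+1 - y k).
Proof. by rewrite /alm_t /alm_y /alm_lam /=; case: alm_state => [[[? ?] ?] ?]. Qed.

Lemma alm_tS k : t k.+1 = (1 + Num.sqrt (1 + 4 * t k ^+ 2)) / 2.
Proof. by rewrite /alm_t /=; case: alm_state => [[[? ?] ?] ?]. Qed.

Lemma alm_t_bounds k : 1 + k%:R / 2 <= t k <= 1 + k%:R.
Proof.
elim: k => [|k /andP[lb ub]]; first by rewrite /alm_t /= mul0r addr0 lexx.
have t_ge0 : 0 <= t k by apply: le_trans lb; rewrite addr_ge0 ?divr_ge0.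
have s_ge0 : 0 <= Num.sqrt (1 + 4 * t k ^+ 2) by exact: sqrtr_ge0.
have s2 : Num.sqrt (1 + 4 * t k ^+ 2) ^+ 2 = 1 + 4 * t k ^+ 2.
  by rewrite sqr_sqrtr // addr_ge0 ?mulr_ge0 ?sqr_ge0.
rewrite alm_tS -natr1; move: s_ge0 s2; set s := Num.sqrt _ => s_ge0 s2.
have s_lb : 2 * t k <= s by nra.
have s_ub : s <= 1 + 2 * t k by nra.
by apply/andP; split; lra.
Qed.

Lemma alm_t_gt0 k : 0 < t k.
Proof.
have /andP[lb _] := alm_t_bounds k.
by apply: lt_le_trans lb; rewrite ltr_wpDr ?divr_ge0.
Qed.

Hypothesis rankA : \rank A = n.
Hypothesis eta_gt0 : 0 < eta.

Lemma alm_x_stationary k :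
  c + A^T *m y k + eta *: (A^T *m (A *m x k.+1 - b)) = 0.
Proof.
rewrite mulmxBr alm_xS mul_gramVK // (addrAC (A^T *m b)) subrr add0r.
by rewrite scalerN scalerKV ?lt0r_neq0 // [c + _]addrC subrr.
Qed.

Lemma alm_lam_feasible k : A^T *m lam k.+1 = - c.
Proof.
apply/eqP; rewrite -addr_eq0 addrC alm_lamS mulmxDr -scalemxAr addrA.
by rewrite (alm_x_stationary k).
Qed.

Lemma alm_lam_dual_optimal {x0} k : A *m x0 = b -> dual_optimal A b c (lam k.+1).
Proof.
have lam_feas : A^T *m lam k.+1 + c = 0 by rewrite alm_lam_feasible addNr.
move=> Ax0; split=> // mu mu_feas.
by rewrite (dual_feasible_objective Ax0 mu_feas) (dual_feasible_objective Ax0 lam_feas).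
Qed.

Lemma alm_y_dual_residual k : A^T *m y k + c = ((-1) ^+ k / t k) *: c.
Proof.
elim: k => [|k IH]; first by rewrite /alm_y /alm_t /= mulmx0 add0r divr1 scale1r.
(* t_0 = 1 kills the momentum at k = 0; afterwards lambda_k is dual feasible *)
have momentum0 : ((t k - 1) / t k.+1) *: (A^T *m (lam k.+1 - lam k)) = 0.
  case: k IH => [_|k _]; first by rewrite /alm_t /= subrr mul0r scale0r.
  by rewrite mulmxBr !alm_lam_feasible subrr scaler0.
rewrite alm_yS !mulmxDr -!scalemxAr momentum0 addr0 mulmxBr alm_lam_feasible.
have ->: A^T *m y k = ((-1) ^+ k / t k) *: c - c by rewrite -IH addrK.
rewrite opprB addrA addNr add0r addrAC addNr add0r scalerN scalerA -scaleNr.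
congr (_ *: _); rewrite exprS.
by field; rewrite !gt_eqF ?alm_t_gt0.
Qed.

Lemma alm_x_closed_form k :
  x k.+1 = xstar A b - ((-1) ^+ k / (eta * t k)) *: (M *m c).
Proof.
rewrite alm_xS mulmxBr alm_y_dual_residual -!scalemxAr scalerA /xstar.
by congr (_ - _ *: _); field; rewrite !gt_eqF ?alm_t_gt0.
Qed.

Lemma alm_step_norm k : `| (-1) ^+ k / (eta * t k) | = (eta * t k)^-1.
Proof.
rewrite normrM normfV normrX normrN normr1 expr1n mul1r ger0_norm //.
by rewrite mulr_ge0 ?ltW ?alm_t_gt0.
Qed.

Lemma alm_gap k :
  `| dotv c (xstar A b - x k.+1) | = dotv c (M *m c) / (eta * t k).
Proof.
rewrite alm_x_closed_form opprB addrC subrK dotvZr normrM alm_step_norm.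
by rewrite ger0_norm ?dotv_gramV_ge0 // mulrC.
Qed.

Lemma alm_residual {x0} k : A *m x0 = b ->
  A *m x k.+1 - b = - ((-1) ^+ k / (eta * t k)) *: (A *m (M *m c)).
Proof.
move=> Ax0; rewrite alm_x_closed_form mulmxBr (xstar_eq rankA Ax0) Ax0.
by rewrite -scalemxAr addrAC subrr add0r scaleNr.
Qed.

Lemma alm_residual_norm {x0} k (N : 'cV[R]_m -> R) : A *m x0 = b -> is_norm N ->
  N (A *m x k.+1 - b) = N (A *m (M *m c)) / (eta * t k).
Proof.
move=> Ax0 [_ [_ [NZ _]]].
by rewrite (alm_residual k Ax0) NZ normrN alm_step_norm mulrC.
Qed.

Lemma alm_t_rate k : k.+1%:R / 2 <= t k <= k.+1%:R.
Proof. by have /andP[lb ub] := alm_t_bounds k; rewrite -natr1; apply/andP; split; lra. Qed.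

End AcceleratedALM.

Theorem mainTheorem13 (R : rcfType) (m n : nat) (A : 'M[R]_(m, n))
  (b : 'cV[R]_m) (c : 'cV[R]_n) (eta : R) (lam0 : 'cV[R]_m)
  (hmn : (n < m)%N) (hrank : \rank A = n)
  (hb : exists x0 : 'cV[R]_n, A *m x0 = b)
  (heta : 0 < eta) :
  let x := alm_x A b c eta lam0 in
  let lam := alm_lam A b c eta lam0 in
  let t := alm_t A b c eta lam0 in
  let M := invmx (A^T *m A) in
  (A *m xstar A b = b /\ forall z : 'cV[R]_n, A *m z = b -> z = xstar A b) /\
  (forall (k : nat) (z : 'cV[R]_n),
     dotv c (x k.+1) + dotv (alm_y A b c eta lam0 k) (A *m x k.+1 - b)
       + eta / 2 * dotv (A *m x k.+1 - b) (A *m x k.+1 - b)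
     <= dotv c z + dotv (alm_y A b c eta lam0 k) (A *m z - b)
       + eta / 2 * dotv (A *m z - b) (A *m z - b)) /\
  (forall k : nat, (1 <= k)%N -> dual_optimal A b c (lam k)) /\
  (forall T : nat, (1 <= T)%N ->
     x T = xstar A b - ((-1) ^+ T.-1 / (eta * t T.-1)) *: (M *m c)
     /\ `| dotv c (xstar A b - x T) | = dotv c (M *m c) / (eta * t T.-1)
     /\ (forall N : 'cV[R]_m -> R, is_norm N ->
           N (A *m x T - b) = N (A *m (M *m c)) / (eta * t T.-1))
     /\ (T%:R / 2 <= t T.-1 <= T%:R)
     /\ (c != 0 ->
           0 < dotv c (M *m c)
           /\ dotv c (M *m c) / (eta * T%:R) <= `| dotv c (xstar A b - x T) |
           /\ `| dotv c (xstar A b - x T) | <= 2 * dotv c (M *m c) / (eta * T%:R)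
           /\ (forall N : 'cV[R]_m -> R, is_norm N ->
                 0 < N (A *m (M *m c))
                 /\ N (A *m (M *m c)) / (eta * T%:R) <= N (A *m x T - b)
                 /\ N (A *m x T - b) <= 2 * N (A *m (M *m c)) / (eta * T%:R)))).
Proof.
move=> x lam t M; rewrite {}/x {}/lam {}/t {}/M.
case: hb => x0 Ax0; have xstarE := xstar_eq hrank Ax0.
split; first by rewrite xstarE; split=> // z Az; apply: (feasible_unique hrank Ax0 Az).
split; first by move=> k z; apply: aug_lagrangian_stationary_min;
  [exact: ltW | exact: alm_x_stationary].
split; first by case=> // k _; exact: alm_lam_dual_optimal Ax0.
case=> // k _ /=.
have t_rate := alm_t_rate A b c eta lam0 k.
have t_gt0 := alm_t_gt0 A b c eta lam0 k.
have residual := alm_residual_norm c lam0 hrank heta k Ax0.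
split; first exact: alm_x_closed_form.
rewrite alm_gap //; do 3!split=> //.
move=> c_neq0; have AMc_neq0 := mul_gramV_neq0 hrank c_neq0.
split; first exact: dotv_gramV_gt0.
have := ler_rate (dotv_gramV_ge0 hrank c) heta t_gt0 t_rate.
move=> /andP[gap_lb gap_ub]; do 2!split=> //.
move=> N N_norm; rewrite residual //; have N_gt0 := is_norm_gt0 N_norm AMc_neq0.
by have /andP[] := ler_rate (ltW N_gt0) heta t_gt0 t_rate.
Qed.
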